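(* Let $k\in\mathbb{N}$ and $\tilde P,\tilde Q\in\mathbb{R}[x]$. There exist $P,Q\in\mathbb{C}[x]$ satisfying (i) $\deg P\le k$, $\deg Q\le k-1$; (ii) $P$ has parity $(k\bmod 2)$ and $Q$ has parity $(k-1\bmod 2)$; (iii) $|P(x)|^2+(1-x^2)|Q(x)|^2=1$ for all $x\in[-1,1]$; and moreover $\Re[P]=\tilde P$, $\Re[Q]=\tilde Q$, if and only if $\tilde P,\tilde Q$ satisfy (i) and (ii) (with $\tilde P,\tilde Q$ in place of $P,Q$) and (vi) for all $x\in[-1,1]$: $\tilde P(x)^2+(1-x^2)\tilde Q(x)^2\le 1$.
   Context: For $P(x)=\sum_j a_jx^j\in\mathbb{C}[x]$, $\Re[P](x):=\sum_j \Re(a_j)x^j$. A polynomial is even (odd) if all its odd-power (even-power) coefficients vanish; the zero polynomial is both; parity $z$ means even if $z$ even and odd if $z$ odd. *)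

From HB Require Import structures.
From mathcomp Require Import all_boot all_order all_algebra.
Set Implicit Arguments. Unset Strict Implicit. Unset Printing Implicit Defensive.
Import Order.TTheory GRing.Theory Num.Theory.
Local Open Scope ring_scope.

Definition poly_even (R : nzRingType) (p : {poly R}) : Prop :=
  forall j : nat, odd j -> p`_j = 0.
Definition poly_odd (R : nzRingType) (p : {poly R}) : Prop :=
  forall j : nat, ~~ odd j -> p`_j = 0.
Definition has_parity (R : nzRingType) (z : nat) (p : {poly R}) : Prop :=
  if odd z then poly_odd p else poly_even p.

Definition poly_Re (C : numClosedFieldType) (p : {poly C}) : {poly C} :=
  \poly_(j < size p) 'Re (p`_j).

(* Taking P = Pt + i A and Q = Qt + i B with A, B real, the identity
   |P|^2 + (1 - x^2) |Q|^2 = 1 on [-1, 1] amounts to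
   F := 1 - Pt^2 - (1 - x^2) Qt^2 = A^2 + (1 - x^2) B^2, and the bound (vi) says F >= 0
   on [-1, 1].  Since F is even, F(x) = G(x^2) with G >= 0 on [0, 1], and we show that
   every such G gives a representation of G(x^2) with the right degrees and parities.
   Such representations multiply (they are squared norms of A + i sqrt(1 - x^2) B), so
   it suffices to treat the factors of G over C: a real root r <= 0 or r >= 1 gives
   x^2 - r or r - x^2, a root in (0, 1) is double because G does not change sign there,
   the roots 0 and 1 give x^2 and 1 - x^2, and a pair of conjugate roots gives a quartic
   that is handled by solving for its coefficients. *)

From HB Require Import structures.
From mathcomp Require Import all_boot all_order all_algebra.
From mathcomp Require Import ring zify.
Import Order.TTheory GRing.Theory Num.Theory.
Local Open Scope ring_scope.

Section ComplementaryPolynomials.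
Local Set Implicit Arguments.
Local Unset Strict Implicit.
Variable C : numClosedFieldType.
Local Notation real_poly := (polyOver (@Num.Def.real_num_pred C)).

Implicit Types (p q A B F G H L P Q Pt Qt : {poly C}) (a r x y z : C).

Definition parity (b : bool) p := forall j, odd j != b -> p`_j = 0.

Lemma has_parityE n p : has_parity n p <-> parity (odd n) p.
Proof.
rewrite /has_parity /parity /poly_odd /poly_even.
by case: (odd n); split=> hp j hj; apply: hp; move: hj; case: (odd j).
Qed.

Lemma parity0 b : parity b 0.
Proof. by move=> j _; rewrite coef0. Qed.

Lemma parityD b p q : parity b p -> parity b q -> parity b (p + q).
Proof. by move=> hp hq j hj; rewrite coefD hp ?hq ?addr0. Qed.

Lemma parityN b p : parity b p -> parity b (- p).
Proof. by move=> hp j hj; rewrite coefN hp ?oppr0. Qed.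

Lemma parityZ b c p : parity b p -> parity b (c *: p).
Proof. by move=> hp j hj; rewrite coefZ hp ?mulr0. Qed.

Lemma parityC c : parity false c%:P.
Proof. by case=> [|j] //= _; rewrite coefC. Qed.

Lemma parityX : parity true 'X.
Proof. by case=> [|[|j]] //= _; rewrite coefX. Qed.

Lemma parityM b c p q : parity b p -> parity c q -> parity (b (+) c) (p * q).
Proof.
move=> hp hq j hj; rewrite coefM big1 // => -[i /=]; rewrite ltnS => le_ij _.
have [hi|hi] := eqVneq (odd i) b; last by rewrite hp ?mul0r.
rewrite hq ?mulr0 // oddB // hi; move: hj; rewrite -hi.
by case: (odd j); case: (odd i); case: (c).
Qed.

Lemma parityXn n : parity (odd n) 'X^n.
Proof.
elim: n => [|n IHn]; first by rewrite expr0; apply: parityC.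
by rewrite exprS; apply: parityM parityX IHn.
Qed.

Lemma parity_1subX2 : parity false (1 - 'X^2).
Proof. by apply: parityD; [rewrite -polyC1; apply: parityC | apply: parityN (@parityXn 2)]. Qed.

Lemma real_poly_conj p : p \is a real_poly -> map_poly Num.conj p = p.
Proof. by move/polyOverP=> hp; apply/polyP=> i; rewrite coef_map; apply/CrealP. Qed.

Lemma real_poly_divl G L q : G \is a real_poly -> L \is a real_poly ->
  L != 0 -> G = q * L -> q \is a real_poly.
Proof.
move=> rG rL L0 GqL; have: map_poly Num.conj q * L = q * L.
  by rewrite -{1}(real_poly_conj rL) -rmorphM /= -GqL real_poly_conj.
move/(mulIf L0)=> qK; apply/polyOverP=> i; apply/CrealP.
by rewrite -coef_map qK.
Qed.

Lemma coef_poly_Re p j : (poly_Re p)`_j = 'Re p`_j.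
Proof.
rewrite coef_poly; case: ltnP => // hj.
by rewrite nth_default // raddf0.
Qed.

Lemma horner_poly_Re p x : x \is Num.real -> (poly_Re p).[x] = 'Re p.[x].
Proof.
move=> rx; rewrite (horner_coef_wide x (size_poly _ _)) horner_coef raddf_sum.
by apply: eq_bigr => i _; rewrite coef_poly_Re /= ReMr // rpredX.
Qed.

Definition weighted_sos (m : nat) F := exists A B,
  [/\ A \is a real_poly, B \is a real_poly,
      (size A <= m.+1)%N /\ (size B <= m)%N,
      parity (odd m) A /\ parity (~~ odd m) B &
      F = A ^+ 2 + (1 - 'X^2) * B ^+ 2].

Lemma size_1subX2 : size (1 - 'X^2 : {poly C}) = 3%N.
Proof. by rewrite addrC size_polyDl size_polyN size_polyXn // size_poly1. Qed.

Lemma size_polyM_leq p q m n :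
  (size p <= m)%N -> (size q <= n)%N -> (size (p * q)%R <= m + n - 1)%N.
Proof. by move=> sp sq; rewrite (leq_trans (size_polyMleq _ _)) // -subn1 leq_sub2r ?leq_add. Qed.

(* Brahmagupta's identity for the norm of [A + i sqrt(1 - x^2) B]. *)
Lemma weighted_sosM m n F1 F2 :
  weighted_sos m F1 -> weighted_sos n F2 -> weighted_sos (m + n) (F1 * F2).
Proof.
move=> [A1 [B1 [rA1 rB1 [sA1 sB1] [pA1 pB1] ->]]].
move=> [A2 [B2 [rA2 rB2 [sA2 sB2] [pA2 pB2] ->]]].
have rW : (1 - 'X^2 : {poly C}) \is a real_poly by rewrite rpredB ?rpred1 ?polyOverXn.
exists (A1 * A2 - (1 - 'X^2) * B1 * B2), (A1 * B2 + A2 * B1); split.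
- by rewrite rpredB ?rpredM.
- by rewrite rpredD ?rpredM.
- have sWB1 := size_polyM_leq (eq_leq size_1subX2) sB1.
  have sWB12 := size_polyM_leq sWB1 sB2.
  have sA12 := size_polyM_leq sA1 sA2; have sA1B2 := size_polyM_leq sA1 sB2.
  have sA2B1 := size_polyM_leq sA2 sB1.
  split; rewrite (leq_trans (size_polyD _ _)) // ?size_polyN geq_max;
    apply/andP; split; [apply: leq_trans sA12 _ | apply: leq_trans sWB12 _
                       | apply: leq_trans sA1B2 _ | apply: leq_trans sA2B1 _]; lia.
- rewrite oddD; split.
    apply: parityD; first exact: parityM.
    by apply: parityN; move: (parityM (parityM parity_1subX2 pB1) pB2);
      case: (odd m); case: (odd n).
  by apply: parityD; move: (parityM pA1 pB2) (parityM pA2 pB1);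
    case: (odd m); case: (odd n) => //= ? ?.
- by ring.
Qed.

Lemma weighted_sos1 : weighted_sos 1 1.
Proof.
exists 'X, 1; split; rewrite ?polyOverX ?rpred1 ?size_polyX ?size_poly1 //.
  by split; [apply: parityX | rewrite -polyC1; apply: parityC].
by ring.
Qed.

Lemma weighted_sos_widen m n F :
  (m <= n)%N -> weighted_sos m F -> weighted_sos n F.
Proof.
move/subnKC <-; elim: (n - m)%N => [|d IHd] hF; first by rewrite addn0.
by rewrite addnS -addn1 -[F]mulr1; apply: weighted_sosM (IHd hF) weighted_sos1.
Qed.

Lemma weighted_sosC c : 0 <= c -> weighted_sos 0 c%:P.
Proof.
move=> c_ge0; exists (sqrtC c)%:P, 0; split.
- by rewrite polyOverC sqrtC_real.
- exact: rpred0.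
- by rewrite size_poly0 size_polyC_leq1.
- by split; [apply: parityC | apply: parity0].
- by rewrite expr0n mulr0 addr0 -polyC_exp sqrtCK.
Qed.

Lemma weighted_sos_affine u v : 0 <= u -> 0 <= v ->
  weighted_sos 1 (u%:P * 'X^2 + v%:P * (1 - 'X^2)).
Proof.
move=> u_ge0 v_ge0; exists ((sqrtC u)%:P * 'X), (sqrtC v)%:P; split.
- by rewrite rpredM ?polyOverX // polyOverC sqrtC_real.
- by rewrite polyOverC sqrtC_real.
- split; last exact: size_polyC_leq1.
  by rewrite (leq_trans (size_polyM_leq (size_polyC_leq1 _) (eq_leq (size_polyX _)))).
- by split; [apply: parityM (parityC _) parityX | apply: parityC].
- by rewrite exprMn -!polyC_exp !sqrtCK; ring.
Qed.

Lemma weighted_sos_X2subC r : r <= 0 -> weighted_sos 1 ('X^2 - r%:P).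
Proof.
move=> r_le0; have := @weighted_sos_affine (1 - r) (- r).
rewrite subr_ge0 oppr_ge0 r_le0 (le_trans r_le0 ler01) => /(_ isT isT).
by rewrite polyCB polyCN; congr weighted_sos; ring.
Qed.

Lemma weighted_sos_CsubX2 r : 1 <= r -> weighted_sos 1 (r%:P - 'X^2).
Proof.
move=> r_ge1; have := @weighted_sos_affine (r - 1) r.
rewrite subr_ge0 r_ge1 (le_trans ler01 r_ge1) => /(_ isT isT).
by rewrite polyCB; congr weighted_sos; ring.
Qed.

Lemma weighted_sos_sqr r : r \is Num.real -> weighted_sos 2 (('X^2 - r%:P) ^+ 2).
Proof.
move=> r_real; exists ('X^2 - r%:P), 0; split.
- by rewrite polyOverXnsubC.
- exact: rpred0.
- by rewrite size_poly0 size_XnsubC.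
- by split; [apply: parityD (@parityXn 2) (parityN (parityC _)) | apply: parity0].
- by rewrite expr0n mulr0 addr0.
Qed.

(* Matching coefficients in [(p x^2 - rho)^2 + (1 - x^2) (s x)^2] forces
   [p^2 - s^2 = 1] and [p^2 - 2 rho p = 1 - 2 a]; [p >= 1] makes [s] real. *)
Lemma quartic_weight_exists a rho : rho \is Num.real -> a <= rho ->
  exists2 p, 1 <= p & p ^+ 2 - 2 * rho * p = 1 - 2 * a.
Proof.
move=> rho_real le_a_rho.
set D := (rho - 1) ^+ 2 + 2 * (rho - a).
have D_ge0 : 0 <= D.
  rewrite addr_ge0 ?real_exprn_even_ge0 ?rpredB ?rpred1 //.
  by rewrite mulr_ge0 ?ler0n ?subr_ge0.
exists (rho + sqrtC D); last by rewrite sqrrD sqrtCK /D; ring.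
rewrite -lerBlDl; case/orP: (real_leVge (rpred1 _) rho_real) => [le_1_rho|le_rho_1].
  by rewrite (@le_trans _ _ 0) ?subr_le0 ?sqrtC_ge0.
rewrite -[1 - rho]sqrCK ?subr_ge0 // ler_sqrtC ?nnegrE ?exprn_ge0 ?subr_ge0 //.
rewrite -subr_ge0 (_ : D - (1 - rho) ^+ 2 = 2 * (rho - a)); last by rewrite /D; ring.
by rewrite mulr_ge0 ?ler0n ?subr_ge0.
Qed.

Lemma weighted_sos_quartic a rho : rho \is Num.real -> a <= rho ->
  weighted_sos 2 ('X^4 - (2 * a)%:P * 'X^2 + (rho ^+ 2)%:P).
Proof.
move=> rho_real le_a_rho; have [p p_ge1 hp] := quartic_weight_exists rho_real le_a_rho.
have p_real : p \is Num.real := ger0_real (le_trans ler01 p_ge1).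
have s2_ge0 : 0 <= p ^+ 2 - 1 by rewrite subr_ge0 exprn_ege1.
set s := sqrtC (p ^+ 2 - 1).
exists (p%:P * 'X^2 - rho%:P), (s%:P * 'X); split.
- by rewrite rpredB ?rpredM ?polyOverX ?polyOverC.
- by rewrite rpredM ?polyOverX ?polyOverC ?sqrtC_real.
- split; last by rewrite (size_polyM_leq (size_polyC_leq1 _) (eq_leq (size_polyX _))).
  rewrite (leq_trans (size_polyD _ _)) // geq_max size_polyN.
  rewrite (leq_trans (size_polyC_leq1 _)) // andbT.
  by rewrite (leq_trans (size_polyM_leq (size_polyC_leq1 _) (eq_leq (size_polyXn _ _)))).
- split; last exact: parityM (parityC _) parityX.
  exact: parityD (parityM (parityC _) (@parityXn 2)) (parityN (parityC _)).
- have -> : 2 * a = 1 - (p ^+ 2 - 2 * rho * p) by rewrite hp; ring.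
  rewrite exprMn -polyC_exp sqrtCK !rmorphB !rmorphM rmorph1 rmorph_nat /=.
  by ring.
Qed.

Lemma weighted_sos_conj_pair r :
  weighted_sos 2 (('X^2 - r%:P) * ('X^2 - (r^*)%:P)).
Proof.
have := weighted_sos_quartic (normr_real r) (leif_Re_Creal r).1.
have -> : 2 * 'Re r = r + r^* by rewrite ReE mulrC divfK ?pnatr_eq0.
by rewrite normCK polyCD polyCM; congr weighted_sos; ring.
Qed.

Lemma poly_norm_bound q R : 0 <= R ->
  exists2 M, 0 <= M & forall y, `|y| <= R -> `|q.[y]| <= M.
Proof.
move=> R_ge0; elim/poly_ind: q => [|q c [M M_ge0 hM]].
  by exists 0 => // y _; rewrite horner0 normr0.
exists (M * R + `|c|) => [|y le_yR]; first by rewrite addr_ge0 ?mulr_ge0.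
rewrite hornerMXaddC (le_trans (ler_normD _ _)) // lerD2r normrM.
by rewrite ler_pM ?hM.
Qed.

Lemma real_poly_ge0_right p a d :
  p \is a real_poly -> a \is Num.real -> 0 < d ->
  (forall y, a < y < a + d -> 0 <= p.[y]) -> 0 <= p.[a].
Proof.
move=> p_real a_real d_gt0 p_ge0.
have pa_real : p.[a] \is Num.real := rpred_horner p_real a_real.
rewrite real_leNgt ?rpred0 //; apply/negP => pa_lt0.
set N := - p.[a]; have N_gt0 : 0 < N by rewrite oppr_gt0.
(* [p(a + e) = p(a) + e q(a + e)] with [q] bounded near [a]: choose [e] small. *)
have /factor_theorem [q pq] : root (p - p.[a]%:P) a.
  by rewrite rootE !hornerE subrr.
have [M M_ge0 hM] := poly_norm_bound q (addr_ge0 (normr_ge0 a) (ltW d_gt0)).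
have K_gt0 : 0 < M + 1 by rewrite ltr_wpDl.
set e := d * N / (d * (M + 1) + N).
have den_gt0 : 0 < d * (M + 1) + N by rewrite addr_gt0 ?mulr_gt0.
have e_gt0 : 0 < e by rewrite divr_gt0 ?mulr_gt0.
have e_lt_d : e < d.
  by rewrite ltr_pdivrMr // mulrDr ltrDr mulr_gt0 ?mulr_gt0.
have eM_lt_N : e * M < N.
  apply: le_lt_trans (_ : e * (M + 1) < N); first by rewrite ler_pM2l // lerDl.
  rewrite mulrAC ltr_pdivrMr // -subr_gt0.
  by rewrite (_ : _ - _ = N * N) ?mulr_gt0 //; ring.
clearbody e.
have pae : p.[a + e] = p.[a] + q.[a + e] * e.
  by rewrite -[p in LHS](subrK p.[a]%:P) pq !hornerE; ring.
have dq_real : q.[a + e] * e \is Num.real.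
  rewrite (_ : _ * _ = p.[a + e] - p.[a]); last by rewrite pae addrAC subrr add0r.
  by rewrite rpredB // (rpred_horner p_real) // rpredD // gtr0_real.
have dq_lt_N : q.[a + e] * e < N.
  apply: le_lt_trans (real_ler_norm dq_real) (le_lt_trans _ eM_lt_N).
  rewrite normrM (gtr0_norm e_gt0) mulrC ler_pM2l // hM //.
  by rewrite (le_trans (ler_normD _ _)) // lerD2l gtr0_norm // ltW.
have := p_ge0 (a + e); rewrite ltrDl e_gt0 ltrD2l e_lt_d => /(_ isT).
by rewrite pae -lerBlDl sub0r -/N real_leNgt ?rpredN // dq_lt_N.
Qed.

Lemma real_poly_ge0_left p a d :
  p \is a real_poly -> a \is Num.real -> 0 < d ->
  (forall y, a - d < y < a -> 0 <= p.[y]) -> 0 <= p.[a].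
Proof.
move=> p_real a_real d_gt0 p_ge0.
have pN_real : p \Po - 'X \is a real_poly by rewrite polyOver_comp ?rpredN ?polyOverX.
have Na_real : - a \is Num.real by rewrite rpredN.
have := real_poly_ge0_right pN_real Na_real d_gt0.
rewrite horner_comp !hornerE opprK; apply=> y /andP[lt_ay lt_yad].
by rewrite horner_comp !hornerE p_ge0 // ltrNr opprB ltrNl lt_ay addrC lt_yad.
Qed.

Definition nonneg_on01 p := forall y, 0 <= y <= 1 -> 0 <= p.[y].

Lemma nonneg_on01_punctured p r : p \is a real_poly ->
  (forall y, 0 <= y <= 1 -> y != r -> 0 <= p.[y]) -> nonneg_on01 p.
Proof.
move=> p_real p_ge0 y /andP[y_ge0 y_le1].
have [ryr|] := eqVneq y r; last by apply: p_ge0; rewrite y_ge0.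
rewrite -{}ryr in p_ge0; have y_real := ger0_real y_ge0.
move: y_le1; rewrite le_eqVlt => /orP[/eqP y1|y_lt1].
  rewrite {}y1 in p_ge0 *.
  apply: real_poly_ge0_left p_real (rpred1 _) ltr01 _ => z.
  by rewrite subrr => /andP[z_gt0 z_lt1]; rewrite p_ge0 ?ltW ?z_gt0 ?z_lt1 ?lt_eqF.
apply: (@real_poly_ge0_right _ _ (1 - y)) => //; first by rewrite subr_gt0.
move=> z; rewrite addrC subrK => /andP[lt_yz lt_z1].
by rewrite p_ge0 ?gt_eqF ?ltW ?lt_z1 ?(le_lt_trans y_ge0 lt_yz).
Qed.

Lemma nonneg_on01_cancel H L r : H \is a real_poly ->
  (forall y, 0 <= y <= 1 -> y != r -> 0 < L.[y]) ->
  nonneg_on01 (H * L) -> nonneg_on01 H.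
Proof.
move=> H_real L_gt0 HL_ge0; apply: (nonneg_on01_punctured (r := r) H_real) => y y01 ne_yr.
by rewrite -(pmulr_lge0 _ (L_gt0 y y01 ne_yr)) -hornerM HL_ge0.
Qed.

Lemma nonneg_on01_root_interior q r : q \is a real_poly -> 0 < r < 1 ->
  nonneg_on01 (q * ('X - r%:P)) -> q.[r] = 0.
Proof.
move=> q_real /andP[r_gt0 r_lt1] G_ge0; have r_real := gtr0_real r_gt0.
have G_sign y : 0 <= y <= 1 -> 0 <= q.[y] * (y - r).
  by move=> y01; rewrite -hornerXsubC -hornerM G_ge0.
apply/eqP; rewrite eq_le; apply/andP; split; last first.
  apply: (@real_poly_ge0_right _ _ (1 - r)) => //; first by rewrite subr_gt0.
  move=> y; rewrite addrC subrK => /andP[lt_ry lt_y1].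
  rewrite -(pmulr_lge0 _ (_ : 0 < y - r)) ?subr_gt0 // G_sign //.
  by rewrite ltW ?ltW ?(lt_trans r_gt0 lt_ry).
rewrite -oppr_ge0 -hornerN; apply: (@real_poly_ge0_left _ _ r) => //.
  by rewrite rpredN.
move=> y; rewrite subrr => /andP[y_gt0 lt_yr].
rewrite hornerN -(pmulr_lge0 _ (_ : 0 < r - y)) ?subr_gt0 // mulNr -mulrN opprB.
by rewrite G_sign // ltW ?ltW ?(lt_trans lt_yr r_lt1).
Qed.

Definition has_sos_factor G := exists H L r,
  [/\ G = H * L, H \is a real_poly, (1 < size L)%N,
      weighted_sos (size L).-1 (L \Po 'X^2) &
      forall y, 0 <= y <= 1 -> y != r -> 0 < L.[y]].

Lemma comp_XsubC_X2 r : ('X - r%:P) \Po 'X^2 = 'X^2 - r%:P.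
Proof. by rewrite comp_polyB comp_polyX comp_polyC. Qed.

Lemma real_poly_XsubC_factor G r : G \is a real_poly -> root G r ->
  r \is Num.real -> exists2 q, q \is a real_poly & G = q * ('X - r%:P).
Proof.
move=> G_real /factor_theorem[q Gq] r_real; exists q => //.
by apply: real_poly_divl G_real _ _ Gq; rewrite ?polyOverXsubC ?polyXsubC_eq0.
Qed.

Lemma has_sos_factor_root_le0 G r : G \is a real_poly -> root G r -> r <= 0 ->
  has_sos_factor G.
Proof.
move=> G_real Gr r_le0; have r_real := ler0_real r_le0.
have [q q_real Gq] := real_poly_XsubC_factor G_real Gr r_real.
exists q, ('X - r%:P), r; split; rewrite ?size_XsubC ?comp_XsubC_X2 //.
  exact: weighted_sos_X2subC.
move=> y /andP[y_ge0 _] ne_yr; rewrite hornerXsubC subr_gt0 lt_def ne_yr.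
exact: le_trans y_ge0.
Qed.

Lemma has_sos_factor_root_ge1 G r : G \is a real_poly -> root G r -> 1 <= r ->
  has_sos_factor G.
Proof.
move=> G_real Gr r_ge1; have r_real := ger0_real (le_trans ler01 r_ge1).
have [q q_real Gq] := real_poly_XsubC_factor G_real Gr r_real.
exists (- q), (r%:P - 'X), r; split.
- by rewrite Gq mulNr -mulrN opprB.
- by rewrite rpredN.
- by rewrite -opprB size_polyN size_XsubC.
- rewrite comp_polyB comp_polyC comp_polyX -[r%:P - 'X]opprB size_polyN size_XsubC.
  exact: weighted_sos_CsubX2.
- move=> y /andP[_ y_le1] ne_yr; rewrite !hornerE subr_gt0 lt_def eq_sym ne_yr.
  exact: le_trans r_ge1.
Qed.

Lemma has_sos_factor_root_in01 G r : G \is a real_poly -> nonneg_on01 G ->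
  root G r -> 0 < r < 1 -> has_sos_factor G.
Proof.
move=> G_real G_ge0 Gr r01; have r_real := gtr0_real (proj1 (andP r01)).
have [q q_real Gq] := real_poly_XsubC_factor G_real Gr r_real.
rewrite Gq in G_ge0; have /eqP qr := nonneg_on01_root_interior q_real r01 G_ge0.
have [q2 q2_real qq2] := real_poly_XsubC_factor q_real qr r_real.
exists q2, (('X - r%:P) ^+ 2), r; split.
- by rewrite Gq qq2 mulrA.
- exact: q2_real.
- by rewrite size_exp_XsubC.
- by rewrite size_exp_XsubC expr2 comp_polyM comp_XsubC_X2 -expr2; apply: weighted_sos_sqr.
- move=> y /andP[y_ge0 _] ne_yr; rewrite horner_exp hornerXsubC.
  by rewrite real_exprn_even_gt0 ?rpredB ?(ger0_real y_ge0) //= subr_eq0.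
Qed.

Lemma real_poly_root_conj G r : G \is a real_poly -> root G r -> root G r^*.
Proof.
by move=> G_real /eqP Gr; rewrite rootE -(real_poly_conj G_real) horner_map /= Gr conjC0.
Qed.

Lemma has_sos_factor_nonreal_root G r : G \is a real_poly -> root G r ->
  r \isn't Num.real -> has_sos_factor G.
Proof.
move=> G_real Gr r_nreal; have ne_rcr : r^* != r by rewrite -CrealE.
have /factor_theorem[q Gq] := Gr.
have : root q r^*.
  move: (real_poly_root_conj G_real Gr); rewrite Gq rootE hornerM hornerXsubC.
  by rewrite mulf_eq0 subr_eq0 (negPf ne_rcr) orbF.
case/factor_theorem=> q2 qq2; set L := ('X - r%:P) * ('X - (r^*)%:P).
have L_real : L \is a real_poly.
  apply/polyOverP=> i; apply/CrealP; rewrite -coef_map /L rmorphM /= !rmorphB /=.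
  by rewrite !map_polyX !map_polyC /= conjCK mulrC.
have GL : G = q2 * L by rewrite Gq qq2 /L; ring.
exists q2, L, r; split=> //.
- by apply: real_poly_divl G_real L_real _ GL; rewrite mulf_neq0 ?polyXsubC_eq0.
- by rewrite size_mul ?polyXsubC_eq0 // !size_XsubC.
- rewrite size_mul ?polyXsubC_eq0 // !size_XsubC comp_polyM !comp_XsubC_X2.
  exact: weighted_sos_conj_pair.
- move=> y /andP[y_ge0 _] _; rewrite /L hornerM !hornerXsubC.
  rewrite -{2}(CrealP (ger0_real y_ge0)) -rmorphB -normCK.
  by rewrite exprn_gt0 // normr_gt0 subr_eq0; apply: contraNneq r_nreal => <-; apply: ger0_real.
Qed.

Lemma nonneg_on01_has_sos_factor G : G \is a real_poly -> nonneg_on01 G ->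
  (1 < size G)%N -> has_sos_factor G.
Proof.
move=> G_real G_ge0 sG; have /closed_rootP[r Gr] : size G != 1%N by rewrite gtn_eqF.
have [r_real|] := boolP (r \is Num.real); last exact: has_sos_factor_nonreal_root.
have [r_le0|r_gt0] := real_leP r_real (rpred0 _).
  exact: has_sos_factor_root_le0 Gr r_le0.
have [r_ge1|r_lt1] := real_leP (rpred1 _) r_real.
  exact: has_sos_factor_root_ge1 Gr r_ge1.
by apply: has_sos_factor_root_in01 G_real G_ge0 Gr _; rewrite r_gt0 r_lt1.
Qed.

Lemma nonneg_on01_weighted_sos G : G \is a real_poly -> nonneg_on01 G ->
  weighted_sos (size G).-1 (G \Po 'X^2).
Proof.
elim: {G}(size G).+1 {-2}G (ltnSn (size G)) => // n IHn G sG G_real G_ge0.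
have [sG_le1|sG_gt1] := leqP (size G) 1.
  have -> : (size G).-1 = 0%N by case: (size G) sG_le1 => [|[]].
  rewrite [G in G \Po _]size1_polyC // comp_polyC; apply: weighted_sosC.
  by rewrite -horner_coef0 G_ge0 ?lexx ?ler01.
have [H [L [r [GHL H_real sL sosL L_gt0]]]] := nonneg_on01_has_sos_factor G_real G_ge0 sG_gt1.
have H_ge0 : nonneg_on01 H by apply: nonneg_on01_cancel H_real L_gt0 _; rewrite -GHL.
have H_neq0 : H != 0.
  by apply: contraTneq sG_gt1; rewrite GHL => ->; rewrite mul0r size_poly0.
have sGHL : size G = (size H + size L).-1.
  by rewrite GHL size_mul // -size_poly_gt0 ltnW.
have sH_gt0 : (0 < size H)%N by rewrite size_poly_gt0.
have sH : (size H < n)%N by move: sG; rewrite sGHL -subn1; lia.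
have := weighted_sosM (IHn H sH H_real H_ge0) sosL.
rewrite -comp_polyM -GHL; apply: weighted_sos_widen.
by rewrite sGHL -!subn1; lia.
Qed.

Lemma even_poly_compX2 F : parity false F -> even_poly F \Po 'X^2 = F.
Proof.
move=> F_even; rewrite -[RHS]poly_even_odd [odd_poly F](_ : _ = 0) ?comp_poly0 ?mul0r ?addr0 //.
by apply/polyP=> i; rewrite coef_odd_poly coef0 F_even //= odd_double.
Qed.

Lemma weighted_sos_even k F : F \is a real_poly -> parity false F ->
  (size F <= k.*2.+2)%N -> (forall x, 0 <= x <= 1 -> 0 <= F.[x]) ->
  weighted_sos k F.
Proof.
move=> F_real F_even sF F_ge0; rewrite -(even_poly_compX2 F_even).
set G := even_poly F.
have G_real : G \is a real_poly.
  by apply/polyOverP=> i; rewrite coef_even_poly (polyOverP F_real).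
have G_ge0 : nonneg_on01 G.
  move=> y /andP[y_ge0 y_le1]; rewrite -(sqrtCK y) -hornerXn -horner_comp.
  rewrite even_poly_compX2 // F_ge0 // sqrtC_ge0 y_ge0 /=.
  by rewrite -sqrtC1 ler_sqrtC ?nnegrE ?ler01.
apply: weighted_sos_widen (nonneg_on01_weighted_sos G_real G_ge0).
rewrite -subn1 leq_subLR add1n (leq_trans (size_even_poly F)) //.
by rewrite leq_uphalf_double doubleS.
Qed.

Lemma Re_sqr_le_normC2 z : 'Re z ^+ 2 <= `|z| ^+ 2.
Proof. by rewrite normC2_Re_Im lerDl real_exprn_even_ge0 ?Creal_Im. Qed.

Lemma one_sub_sqr_ge0 x : -1 <= x <= 1 -> 0 <= 1 - x ^+ 2.
Proof.
case/andP=> x_geN1 x_le1; rewrite (_ : 1 - x ^+ 2 = (1 - x) * (x - -1)); last by ring.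
by rewrite mulr_ge0 ?subr_ge0.
Qed.

Lemma has_parity_poly_Re n p : has_parity n p -> has_parity n (poly_Re p).
Proof.
by move/has_parityE=> p_par; apply/has_parityE=> j j_par; rewrite coef_poly_Re p_par ?raddf0.
Qed.

Lemma poly_Re_complementary k P Q :
  (size P <= k.+1)%N -> (size Q <= k)%N -> has_parity k P -> has_parity k.+1 Q ->
  (forall x, x \is Num.real -> -1 <= x <= 1 ->
     `|P.[x]| ^+ 2 + (1 - x ^+ 2) * `|Q.[x]| ^+ 2 = 1) ->
  [/\ (size (poly_Re P) <= k.+1)%N, (size (poly_Re Q) <= k)%N,
      has_parity k (poly_Re P), has_parity k.+1 (poly_Re Q) &
      forall x, x \is Num.real -> -1 <= x <= 1 ->
        (poly_Re P).[x] ^+ 2 + (1 - x ^+ 2) * (poly_Re Q).[x] ^+ 2 <= 1].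
Proof.
move=> sP sQ pP pQ PQ1; split.
- exact: leq_trans (size_poly _ _) sP.
- exact: leq_trans (size_poly _ _) sQ.
- exact: has_parity_poly_Re.
- exact: has_parity_poly_Re.
move=> x x_real x11; rewrite -[leRHS](PQ1 x x_real x11) !horner_poly_Re //.
by rewrite lerD ?ler_wpM2l ?one_sub_sqr_ge0 ?Re_sqr_le_normC2.
Qed.

Lemma horner_complement Pt Qt x :
  (1 - (Pt ^+ 2 + (1 - 'X^2) * Qt ^+ 2)).[x] =
  1 - (Pt.[x] ^+ 2 + (1 - x ^+ 2) * Qt.[x] ^+ 2).
Proof. by rewrite !hornerE. Qed.

Lemma weighted_sos_complement k Pt Qt :
  Pt \is a real_poly -> Qt \is a real_poly ->
  (size Pt <= k.+1)%N -> (size Qt <= k)%N -> has_parity k Pt -> has_parity k.+1 Qt ->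
  (forall x, x \is Num.real -> -1 <= x <= 1 ->
     Pt.[x] ^+ 2 + (1 - x ^+ 2) * Qt.[x] ^+ 2 <= 1) ->
  weighted_sos k (1 - (Pt ^+ 2 + (1 - 'X^2) * Qt ^+ 2)).
Proof.
move=> Pt_real Qt_real sPt sQt /has_parityE pPt /has_parityE pQt PQt_le1.
have W_real : (1 - 'X^2 : {poly C}) \is a real_poly by rewrite rpredB ?rpred1 ?polyOverXn.
apply: weighted_sos_even.
- by rewrite rpredB ?rpred1 ?rpredD ?rpredM.
- apply: parityD; first by rewrite -polyC1; apply: parityC.
  apply/parityN/parityD; first by have := parityM pPt pPt; rewrite addbb expr2.
  by have := parityM parity_1subX2 (parityM pQt pQt); rewrite addbb expr2.
- have sPt2 := size_polyM_leq sPt sPt.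
  have sWQt2 := size_polyM_leq (eq_leq size_1subX2) (size_polyM_leq sQt sQt).
  rewrite (leq_trans (size_polyD _ _)) // size_polyN size_poly1 geq_max /=.
  rewrite (leq_trans (size_polyD _ _)) // geq_max -addnn.
  by apply/andP; split; [apply: leq_trans sPt2 _ | apply: leq_trans sWQt2 _]; lia.
- move=> x /andP[x_ge0 x_le1]; rewrite horner_complement subr_ge0 PQt_le1 ?ger0_real //.
  by rewrite x_le1 (le_trans _ x_ge0) // lerN10.
Qed.

Lemma complementary_of_poly_Re k Pt Qt :
  Pt \is a real_poly -> Qt \is a real_poly ->
  (size Pt <= k.+1)%N -> (size Qt <= k)%N -> has_parity k Pt -> has_parity k.+1 Qt ->
  (forall x, x \is Num.real -> -1 <= x <= 1 ->
     Pt.[x] ^+ 2 + (1 - x ^+ 2) * Qt.[x] ^+ 2 <= 1) ->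
  exists P Q, [/\ (size P <= k.+1)%N /\ (size Q <= k)%N,
     has_parity k P /\ has_parity k.+1 Q,
     (forall x, x \is Num.real -> -1 <= x <= 1 ->
        `|P.[x]| ^+ 2 + (1 - x ^+ 2) * `|Q.[x]| ^+ 2 = 1),
     poly_Re P = Pt & poly_Re Q = Qt].
Proof.
move=> Pt_real Qt_real sPt sQt pPt pQt PQt_le1.
have [A [B [A_real B_real [sA sB] [pA pB] FAB]]] :=
  weighted_sos_complement Pt_real Qt_real sPt sQt pPt pQt PQt_le1.
exists (Pt + 'i *: A), (Qt + 'i *: B); split.
- by split; rewrite (leq_trans (size_polyD _ _)) // geq_max ?sPt ?sQt
    (leq_trans (size_scale_leq _ _)).
- by split; apply/has_parityE/parityD/parityZ => //; apply/has_parityE.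
- move=> x x_real _.
  have AB : A.[x] ^+ 2 + (1 - x ^+ 2) * B.[x] ^+ 2 =
            1 - (Pt.[x] ^+ 2 + (1 - x ^+ 2) * Qt.[x] ^+ 2).
    by rewrite -horner_complement FAB !(hornerD, hornerM, hornerN, hornerX, hornerC); ring.
  rewrite !hornerD !hornerZ !normC2_rect ?rpred_horner //.
  by rewrite -[RHS](subrK (Pt.[x] ^+ 2 + (1 - x ^+ 2) * Qt.[x] ^+ 2)) -AB; ring.
- apply/polyP=> j; rewrite coef_poly_Re coefD coefZ Re_rect //.
    exact: (polyOverP Pt_real).
  exact: (polyOverP A_real).
- apply/polyP=> j; rewrite coef_poly_Re coefD coefZ Re_rect //.
    exact: (polyOverP Qt_real).
  exact: (polyOverP B_real).
Qed.

End ComplementaryPolynomials.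

Theorem mainTheorem4 (C : numClosedFieldType) (k : nat) (Pt Qt : {poly C})
    (hPt : Pt \is a polyOver Num.real) (hQt : Qt \is a polyOver Num.real) :
  (exists P Q : {poly C},
     [/\ (size P <= k.+1)%N /\ (size Q <= k)%N,
         has_parity k P /\ has_parity k.+1 Q,
         (forall x : C, x \is Num.real -> -1 <= x <= 1 ->
            `|P.[x]| ^+ 2 + (1 - x ^+ 2) * `|Q.[x]| ^+ 2 = 1),
         poly_Re P = Pt & poly_Re Q = Qt])
  <->
  [/\ (size Pt <= k.+1)%N, (size Qt <= k)%N,
      has_parity k Pt, has_parity k.+1 Qt &
      (forall x : C, x \is Num.real -> -1 <= x <= 1 ->
         Pt.[x] ^+ 2 + (1 - x ^+ 2) * Qt.[x] ^+ 2 <= 1)].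
Proof.
split=> [[P [Q [[sP sQ] [pP pQ] PQ1 <- <-]]] | [sPt sQt pPt pQt PQt_le1]].
  exact: poly_Re_complementary.
exact: complementary_of_poly_Re.
Qed.
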